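(* Let $\Gamma\curvearrowright X, I$ be a dynamical ideal with permutation model $W[[X]]$. (1) If the dynamical ideal has cofinal orbits, then $W[[X]]$ satisfies the axiom of well-ordered choice. (2) If $I$ is definably closed and $W[[X]]$ satisfies the axiom of well-ordered choice, then the dynamical ideal has cofinal orbits.
   Context: Work in ZFC. $V[[X]]$ is the well-founded model of ZFCA with set of atoms exactly $X$ in which every set of elements is represented by an element. A group action of $\Gamma$ on $X$ extends to $V[[X]]$ by $\gamma\cdot A=\{\gamma\cdot B:B\in A\}$. $\mathrm{stab}(A)=\{\gamma:\gamma\cdot A=A\}$, $\mathrm{pstab}(a)=\{\gamma:\gamma\cdot B=B\ \forall B\in a\}$. A dynamical ideal $\Gamma\curvearrowright X, I$: a group $\Gamma$ acting on $X$ and a $\Gamma$-invariant ideal $I$ on $X$ containing all singletons. Its permutation model $W[[X]]$ is the class of $A\in V[[X]]$ such that $A$ and every element of its transitive closure are symmetric, where $A$ is symmetric if $\mathrm{pstab}(b)\subseteq\mathrm{stab}(A)$ for some $b\in I$. The axiom of well-ordered choice: every well-orderable family of nonempty sets has a choice function. For $a,b\in I$, $b$ is $a$-large if for every $c\in I$ there is $\gamma\in\mathrm{pstab}(a)$ with $c\subseteq\gamma\cdot b$. The dynamical ideal has cofinal orbits if for every $a\in I$ there is an $a$-large $b\in I$. A set $a\subseteq X$ is definably closed if for every $x\in X\setminus a$ there is $\gamma\in\mathrm{pstab}(a)$ with $\gamma\cdot x\neq x$; the dynamical ideal is definably closed if every set in $I$ is a subset of a definably closed set in $I$. *)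

(* Model of V[[X]] (well-founded sets with atoms X) as
   Aczel-style trees with atoms, with extensional (bisimulation) equality. *)

Inductive U (X : Type) : Type :=
| Atom : X -> U X
| Node : forall I : Type, (I -> U X) -> U X.
Arguments Atom {X} _.
Arguments Node {X} I _.

Fixpoint ueq {X : Type} (A B : U X) {struct A} : Prop :=
  match A with
  | Atom x => match B with Atom y => x = y | Node _ _ => False end
  | Node K f =>
      match B with
      | Atom _ => False
      | Node J g =>
          (forall i, exists j, ueq (f i) (g j)) /\
          (forall j, exists i, ueq (f i) (g j))
      end
  end.

Definition umem {X : Type} (a A : U X) : Prop :=
  match A with
  | Atom _ => False
  | Node K f => exists i, ueq a (f i)
  end.

Definition upair {X : Type} (a b : U X) : U X :=
  Node bool (fun t => if t then a else b).
Definition using1 {X : Type} (a : U X) : U X := Node unit (fun _ => a).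
Definition kpair {X : Type} (a b : U X) : U X :=
  upair (using1 a) (upair a b).

Definition is_group {G : Type} (mul : G -> G -> G) (one : G) (inv : G -> G) :=
  (forall a b c, mul a (mul b c) = mul (mul a b) c) /\
  (forall a, mul one a = a) /\ (forall a, mul a one = a) /\
  (forall a, mul (inv a) a = one) /\ (forall a, mul a (inv a) = one).

Definition is_action {G X : Type} (mul : G -> G -> G) (one : G)
  (act : G -> X -> X) :=
  (forall x, act one x = x) /\
  (forall g h x, act (mul g h) x = act g (act h x)).

Definition img {G X : Type} (act : G -> X -> X) (g : G) (a : X -> Prop) : X -> Prop :=
  fun y => exists x, a x /\ y = act g x.

Definition subs {X : Type} (a b : X -> Prop) := forall x, a x -> b x.

Definition is_dyn_ideal {G X : Type} (act : G -> X -> X)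
  (I : (X -> Prop) -> Prop) :=
  I (fun _ => False) /\
  (forall a b, I b -> subs a b -> I a) /\
  (forall a b, I a -> I b -> I (fun x => a x \/ b x)) /\
  (forall x0, I (fun x => x = x0)) /\
  (forall g a, I a -> I (img act g a)).

Fixpoint uact {G X : Type} (act : G -> X -> X) (g : G) (A : U X) : U X :=
  match A with
  | Atom x => Atom (act g x)
  | Node K f => Node K (fun i => uact act g (f i))
  end.

Definition pstab {G X : Type} (act : G -> X -> X) (b : X -> Prop) (g : G) :=
  forall x, b x -> act g x = x.

Definition symmetric {G X : Type} (act : G -> X -> X)
  (I : (X -> Prop) -> Prop) (A : U X) :=
  exists b, I b /\ forall g, pstab act b g -> ueq (uact act g A) A.

(** membership in the permutation model W[[X]]: hereditarily symmetric *)
Fixpoint inW {G X : Type} (act : G -> X -> X) (I : (X -> Prop) -> Prop)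
  (A : U X) : Prop :=
  symmetric act I A /\
  match A with
  | Atom _ => True
  | Node _ f => forall i, inW act I (f i)
  end.

Definition well_orders {X : Type} (R F : U X) : Prop :=
  let rel a b := umem (kpair a b) R in
  (forall p, umem p R -> exists a b, umem a F /\ umem b F /\ ueq p (kpair a b)) /\
  (forall a, umem a F -> ~ rel a a) /\
  (forall a b c, umem a F -> umem b F -> umem c F -> rel a b -> rel b c -> rel a c) /\
  (forall a b, umem a F -> umem b F -> ~ ueq a b -> rel a b \/ rel b a) /\
  (forall P : U X -> Prop, (exists a, P a /\ umem a F) ->
     exists m, P m /\ umem m F /\ forall a, P a -> umem a F -> ~ rel a m).

Definition choice_fun {X : Type} (c F : U X) : Prop :=
  (forall p, umem p c -> exists B y, umem B F /\ umem y B /\ ueq p (kpair B y)) /\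
  (forall B, umem B F -> exists y, umem (kpair B y) c) /\
  (forall B B' y y', umem (kpair B y) c -> umem (kpair B' y') c ->
     ueq B B' -> ueq y y').

Definition WO_choice {G X : Type} (act : G -> X -> X) (I : (X -> Prop) -> Prop) : Prop :=
  forall F : U X, inW act I F ->
    (exists R, inW act I R /\ well_orders R F) ->
    (forall B, umem B F -> exists y, umem y B) ->
    exists c, inW act I c /\ choice_fun c F.

Definition large {G X : Type} (act : G -> X -> X) (I : (X -> Prop) -> Prop)
  (a b : X -> Prop) : Prop :=
  forall c, I c -> exists g, pstab act a g /\ subs c (img act g b).

Definition cofinal_orbits {G X : Type} (act : G -> X -> X) (I : (X -> Prop) -> Prop) :=
  forall a, I a -> exists b, I b /\ large act I a b.

Definition def_closed_set {G X : Type} (act : G -> X -> X) (a : X -> Prop) :=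
  forall x, ~ a x -> exists g, pstab act a g /\ act g x <> x.

Definition def_closed {G X : Type} (act : G -> X -> X) (I : (X -> Prop) -> Prop) :=
  forall a, I a -> exists d, I d /\ subs a d /\ def_closed_set act d.

(* Both directions rest on rigidity: a group element fixing a set F together with a
   well-order of F fixes every member of F, since the least member it moves would be
   compared with its own image.

   (1) Let a support a well-ordered family F of W[[X]] and let b be a-large.  Every
   member B of F is then fixed by pstab(a), and every y in B is moved by some
   g in pstab(a) to an element of B supported by b.  Choosing such elements,
   uniformly on equal members, yields a choice function supported by a and b.

   (2) Fix a in I.  Code each c in I rigidly as c paired with a well-order of c, and
   take the pstab(a)-orbits of these codes: they form a family well-orderable in
   W[[X]] and supported by a.  A choice function for it picks some g.code(c) in each
   orbit, and that point is supported by any definably closed d in I containing a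
   and a support of the choice function.  Rigidity of the code then gives g.c
   included in d, i.e. c included in inv(g).d, so d is a-large. *)

From mathcomp Require Import ssreflect ssrfun ssrbool eqtype boolp wochoice.

Set Implicit Arguments.
Unset Strict Implicit.
Unset Printing Implicit Defensive.

Record strict_well_order {T : Type} (lt : T -> T -> Prop) : Prop := StrictWellOrder {
  swo_irrefl : forall x, ~ lt x x;
  swo_trans : forall x y z, lt x y -> lt y z -> lt x z;
  swo_total : forall x y, x = y \/ lt x y \/ lt y x;
  swo_min : forall P : T -> Prop, (exists x, P x) ->
    exists2 m, P m & forall x, P x -> ~ lt x m }.

Lemma exists_strict_well_order (T : Type) :
  exists lt : T -> T -> Prop, strict_well_order lt.
Proof.
have [R Rwo] := well_ordering_principle {classic T}.
have Rch : wo_chain R predT by move=> A _; exact: Rwo.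
have Rrefl x : R x x by exact: wo_chain_reflexive Rch x isT.
have Ranti x y : R x y -> R y x -> x = y.
  by move=> xy yx; apply: (wo_chain_antisymmetric Rch) => //; rewrite xy yx.
have Rtot x y : R x y || R y x by exact: wo_chainW Rch x y isT isT.
have Rtr x y z : R x y -> R y z -> R x z.
  move=> xy yz.
  have [|m [[/or3P[] /eqP-> lb] _]] := Rwo [pred w | [|| w == x, w == y | w == z]].
  - by exists x; rewrite inE eqxx.
  - by apply: lb; rewrite inE eqxx !orbT.
  - by rewrite (Ranti x y xy (lb x _)) // inE eqxx.
  - by rewrite -(Ranti y z yz (lb y _)) // inE eqxx orbT.
exists (fun x y => ~ R y x); split.
- by move=> x; rewrite Rrefl.
- move=> x y z yx zy zx; apply: zy; apply: Rtr zx _.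
  by case/orP: (Rtot x y) => // /yx.
- move=> x y; case: (pselect (R y x)) => [yx|]; last by right; left.
  case: (pselect (R x y)) => [xy|]; last by right; right.
  by left; apply: Ranti.
- move=> P [x Px].
  have [|m [[Pm lb] _]] := Rwo [pred z | `[< P z >]]; first by exists x; exact/asboolP.
  by exists m => [|y /asboolP Py []]; [exact/asboolP | apply: lb].
Qed.

Lemma choice_invariant (A B : Type) (E : A -> A -> Prop) (P : A -> B -> Prop) :
  (forall a, E a a) -> (forall a a', E a a' -> E a' a) ->
  (forall a a' a'', E a a' -> E a' a'' -> E a a'') ->
  (forall a a' b, E a a' -> P a b -> P a' b) ->
  (forall a, exists b, P a b) ->
  exists f : A -> B, (forall a, P a (f a)) /\ (forall a a', E a a' -> f a = f a').
Proof.
move=> Erefl Esym Etrans Pinv Pex.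
(* Choose on the classes [E a] as predicates, so equivalent arguments get one choice. *)
pose class := {C : A -> Prop | exists a, C = E a}.
have [Y PY] : {Y : class -> B & forall C a, sval C = E a -> P a (Y C)}.
  apply: (@choice class B (fun C b => forall a, sval C = E a -> P a b)).
  move=> [C [a0 Ca0]] /=; have [b Pb] := Pex a0.
  by exists b => a Ea; apply: Pinv Pb; rewrite -Ca0 Ea.
exists (fun a => Y (exist _ (E a) (ex_intro _ a erefl))); split=> [a | a a' Eaa'].
  exact: PY.
congr Y; apply: eq_exist; apply/funext => x; apply/propext.
by split; [apply: Etrans; apply: Esym | apply: Etrans].
Qed.

Section HereditarySets.
Variable X : Type.
Implicit Types a b c A B C F R : U X.

Lemma ueq_refl A : ueq A A.
Proof. by elim: A => [x | K f IH] //=; split=> i; exists i. Qed.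

Lemma ueq_sym A B : ueq A B -> ueq B A.
Proof.
elim: A B => [x | K f IH] [y | J g] //=.
case=> fg gf; split=> [j | i].
- by have [i /IH gfi] := gf j; exists i.
- by have [j /IH fgj] := fg i; exists j.
Qed.

Lemma ueq_trans A B C : ueq A B -> ueq B C -> ueq A C.
Proof.
elim: A B C => [x | K f IH] [y | J g] [z | L h] //=; first by move=> -> ->.
case=> fg gf [gh hg]; split=> [i | l].
- have [j fgij] := fg i; have [l ghjl] := gh j.
  by exists l; apply: IH fgij ghjl.
- have [j ghjl] := hg l; have [i fgij] := gf j.
  by exists i; apply: IH fgij ghjl.
Qed.

Lemma umem_ueq_l a a' A : ueq a a' -> umem a A -> umem a' A.
Proof. by case: A => //= K f aa' [i ai]; exists i; apply: ueq_trans (ueq_sym aa') ai. Qed.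

Lemma umem_ueq_r a A A' : ueq A A' -> umem a A -> umem a A'.
Proof.
case: A A' => [x | K f] [y | J g] //= [fg _] [i ai].
by have [j fgij] := fg i; exists j; apply: ueq_trans ai fgij.
Qed.

Lemma umem_upair c a b : umem c (upair a b) <-> ueq c a \/ ueq c b.
Proof. by split=> [[[] ?] | [? | ?]]; [left | right | exists true | exists false]. Qed.

Lemma umem_using1 c a : umem c (using1 a) <-> ueq c a.
Proof. by split=> [[[] ?] | ?] //; exists tt. Qed.

Lemma upair_cong a a' b b' : ueq a a' -> ueq b b' -> ueq (upair a b) (upair a' b').
Proof.
by move=> aa' bb'; split=> -[]; [exists true | exists false | exists true | exists false].
Qed.

Lemma kpair_cong a a' b b' : ueq a a' -> ueq b b' -> ueq (kpair a b) (kpair a' b').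
Proof. by move=> aa' bb'; apply: upair_cong; [split=> -[]; exists tt | apply: upair_cong]. Qed.

Lemma kpair_inj_l a b a' b' : ueq (kpair a b) (kpair a' b') -> ueq a a'.
Proof.
move=> E; have : umem (using1 a) (kpair a' b').
  by apply: umem_ueq_r E _; exists true; apply: ueq_refl.
case/umem_upair => E1; apply: ueq_sym; apply/(umem_using1 a'); apply: umem_ueq_r (ueq_sym E1) _.
- exact/umem_using1/ueq_refl.
- by apply/umem_upair; left; apply: ueq_refl.
Qed.

Lemma kpair_inj_r a b a' b' : ueq (kpair a b) (kpair a' b') -> ueq b a' \/ ueq b b'.
Proof.
move=> E; have : umem (upair a b) (kpair a' b').
  by apply: umem_ueq_r E _; exists false; apply: ueq_refl.
have bab : umem b (upair a b) by apply/umem_upair; right; apply: ueq_refl.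
case/umem_upair => E1; have := umem_ueq_r E1 bab.
- by move/umem_using1; left.
- by move/umem_upair.
Qed.

Lemma kpair_inj a b a' b' : ueq (kpair a b) (kpair a' b') -> ueq a a' /\ ueq b b'.
Proof.
move=> E; have aa' := kpair_inj_l E; split=> //.
case: (kpair_inj_r E) => [ba' | //]; case: (kpair_inj_r (ueq_sym E)) => [b'a | /ueq_sym //].
by apply: ueq_trans ba' _; apply: ueq_trans (ueq_sym aa') (ueq_sym b'a).
Qed.

Lemma choice_funP c F B :
  choice_fun c F -> umem B F -> exists2 y, umem (kpair B y) c & umem y B.
Proof.
case=> cF [Fc _] FB; have [y Bc] := Fc B FB; exists y => //.
have [B' [y' [FB' [B'y' /kpair_inj[BB' yy']]]]] := cF _ Bc.
by apply: umem_ueq_l (ueq_sym yy') _; apply: umem_ueq_r (ueq_sym BB') B'y'.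
Qed.

Lemma choice_fun_graph (K : Type) (f s : K -> U X) :
  (forall k, umem (s k) (f k)) -> (forall k k', ueq (f k) (f k') -> ueq (s k) (s k')) ->
  choice_fun (Node K (fun k => kpair (f k) (s k))) (Node K f).
Proof.
move=> sf fs; split; [|split].
- move=> p [k pk]; exists (f k), (s k).
  by split; [exists k; apply: ueq_refl | split].
- by move=> B [k Bk]; exists (s k), k; apply: kpair_cong (ueq_refl _).
- move=> B B' y y' [k /kpair_inj[Bk yk]] [k' /kpair_inj[B'k' y'k']] BB'.
  have /fs sk : ueq (f k) (f k').
    by apply: ueq_trans (ueq_sym Bk) _; apply: ueq_trans BB' B'k'.
  by apply: ueq_trans yk _; apply: ueq_trans sk (ueq_sym y'k').
Qed.

Definition urel (K : Type) (lt : K -> K -> Prop) (f : K -> U X) : U X :=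
  Node {p : K * K | lt p.1 p.2} (fun p => kpair (f (sval p).1) (f (sval p).2)).

Lemma umem_urel K (lt : K -> K -> Prop) (f : K -> U X) a b :
  umem (kpair a b) (urel lt f) <->
  exists k1 k2, [/\ lt k1 k2, ueq a (f k1) & ueq b (f k2)].
Proof.
split=> [[[[k1 k2] lt12] /kpair_inj[ak1 bk2]] | [k1 [k2 [lt12 ak1 bk2]]]].
  by exists k1, k2.
by exists (exist _ (k1, k2) lt12); apply: kpair_cong.
Qed.

Lemma well_orders_urel K (lt : K -> K -> Prop) (f : K -> U X) :
  strict_well_order lt -> (forall k k', ueq (f k) (f k') -> k = k') ->
  well_orders (urel lt f) (Node K f).
Proof.
case=> irr tr tot wmin finj.
have same k k' a : ueq a (f k) -> ueq a (f k') -> k = k'.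
  by move=> ak ak'; apply: finj; apply: ueq_trans (ueq_sym ak) ak'.
split; [|split; [|split; [|split]]].
- move=> p [[[k1 k2] lt12] pk]; exists (f k1), (f k2).
  by split; [exists k1 | split; [exists k2 |]]; rewrite //; apply: ueq_refl.
- by move=> a _ /umem_urel[k1 [k2 [lt12 ak1 /(same _ _ _ ak1) e12]]]; subst k2; apply: (irr k1).
- move=> a b c _ _ _ /umem_urel[k1 [k2 [lt12 ak1 bk2]]] /umem_urel[k3 [k4 [lt34 bk3 ck4]]].
  have e23 := same _ _ _ bk2 bk3; subst k3.
  by apply/umem_urel; exists k1, k4; split=> //; apply: tr lt34.
- move=> a b [k ak] [k' bk'] ab.
  case: (tot k k') => [e | [lt12 | lt21]].
  + by subst k'; case: ab; apply: ueq_trans ak (ueq_sym bk').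
  + by left; apply/umem_urel; exists k, k'.
  + by right; apply/umem_urel; exists k', k.
- move=> P [a [Pa [k ak]]].
  have [|m [am Pam amm] mmin] := wmin (fun k => exists2 a, P a & ueq a (f k)).
    by exists k, a.
  exists am; split=> //; split; first by exists m.
  move=> a' Pa' _ /umem_urel[k1 [k2 [lt12 a'k1 /(same _ _ _ amm) e2]]]; subst k2.
  by apply: (mmin k1) => //; exists a'.
Qed.

Section Image.
Variables (T : Type) (lt : T -> T -> Prop) (P : T -> Prop) (f : T -> U X).

(* One index per [ueq]-class of values, the [lt]-least one, so that the image is
   well-ordered by [lt] without repetitions. *)
Definition least_index t := P t /\ forall t', P t' -> lt t' t -> ~ ueq (f t') (f t).

Definition uimage : U X := Node {t | least_index t} (fun t => f (sval t)).

Definition uimage_order : U X :=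
  urel (fun t t' : {t | least_index t} => lt (sval t) (sval t')) (fun t => f (sval t)).

Hypothesis lt_wo : strict_well_order lt.

Lemma umem_uimage t : P t -> umem (f t) uimage.
Proof.
move=> Pt; have [|m [m_eq Pm] mmin] := swo_min lt_wo (P := fun m => P m /\ ueq (f m) (f t)).
  by exists t; split=> //; apply: ueq_refl.
have least_m : least_index m.
  split=> // t' Pt' lt'm t'm; apply: (mmin t') lt'm; split=> //.
  exact: ueq_trans t'm Pm.
by exists (exist _ m least_m); apply: ueq_sym.
Qed.

Lemma uimageP y : umem y uimage -> exists2 t, P t & ueq y (f t).
Proof. by case=> -[t tl] yt; exists t; [exact: tl.1 |]. Qed.

Lemma well_orders_uimage : well_orders uimage_order uimage.
Proof.
case: lt_wo => irr tr tot wmin; apply: well_orders_urel.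
  split=> [[t _] | [t _] [t' _] [t'' _] | [t tP] [t' t'P] | Q [[t tP] Qt]] /=.
  - exact: irr.
  - exact: tr.
  - case: (tot t t') => [e | ]; last by right.
    by left; subst t'; apply: eq_exist.
  - have [|m [mP Qm] mmin] := wmin (fun m => exists mP, Q (exist _ m mP)).
      by exists t, tP.
    by exists (exist _ m mP) => // -[t' t'P] Qt'; apply: mmin; exists t'P.
move=> [t tl] [t' t'l] /= tt'.
case: (tot t t') => [e | [ltt' | lt't]]; first by subst t'; apply: eq_exist.
- by case: (t'l.2 t tl.1).
- by case: (tl.2 t' t'l.1 lt't); apply: ueq_sym.
Qed.
End Image.

Definition ucode (ltX : X -> X -> Prop) (c : X -> Prop) : U X :=
  kpair (uimage ltX c Atom) (uimage_order ltX c Atom).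

End HereditarySets.

Section PermutationModel.
Variables (X G : Type) (mul : G -> G -> G) (one : G) (inv : G -> G) (act : G -> X -> X).
Hypotheses (HG : is_group mul one inv) (Hact : is_action mul one act).
Variable I : (X -> Prop) -> Prop.
Hypothesis HI : is_dyn_ideal act I.
Implicit Types (A B F R y : U X) (b c d : X -> Prop) (g h : G).

Lemma mulgA g h k : mul g (mul h k) = mul (mul g h) k.
Proof. by case: HG. Qed.

Lemma mul1g g : mul one g = g.
Proof. by case: HG => _ []. Qed.

Lemma mulVg g : mul (inv g) g = one.
Proof. by case: HG => _ [_ [_ []]]. Qed.

Lemma mulgV g : mul g (inv g) = one.
Proof. by case: HG => _ [_ [_ []]]. Qed.

Lemma act1 x : act one x = x.
Proof. by case: Hact. Qed.

Lemma actM g h x : act (mul g h) x = act g (act h x).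
Proof. by case: Hact. Qed.

Lemma actK g : cancel (act g) (act (inv g)).
Proof. by move=> x; rewrite -actM mulVg act1. Qed.

Lemma actVK g : cancel (act (inv g)) (act g).
Proof. by move=> x; rewrite -actM mulgV act1. Qed.

Lemma uact1 A : uact act one A = A.
Proof. by elim: A => [x | K f IH] /=; [rewrite act1 | congr (Node K); apply: funext]. Qed.

Lemma uactM g h A : uact act (mul g h) A = uact act g (uact act h A).
Proof. by elim: A => [x | K f IH] /=; [rewrite actM | congr (Node K); apply: funext]. Qed.

Lemma uactK g : cancel (uact act g) (uact act (inv g)).
Proof. by move=> A; rewrite -uactM mulVg uact1. Qed.

Lemma uactVK g : cancel (uact act (inv g)) (uact act g).
Proof. by move=> A; rewrite -uactM mulgV uact1. Qed.

Lemma uact_ueq g A B : ueq A B -> ueq (uact act g A) (uact act g B).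
Proof.
elim: A B => [x | K f IH] [y | J f'] //=; first by move->.
by case=> ff' f'f; split=> [i | j]; [case: (ff' i) | case: (f'f j)] => k /IH; exists k.
Qed.

Lemma umem_uact g y A : umem y A -> umem (uact act g y) (uact act g A).
Proof. by case: A => //= K f [i yi]; exists i; apply: uact_ueq. Qed.

Lemma uact_kpair g A B : uact act g (kpair A B) = kpair (uact act g A) (uact act g B).
Proof.
rewrite /kpair /upair /= ; congr (Node bool); apply: funext => -[] //=.
by congr (Node bool); apply: funext => -[].
Qed.

Lemma pstab1 b : pstab act b one.
Proof. by move=> x _; apply: act1. Qed.

Lemma pstabM b g h : pstab act b g -> pstab act b h -> pstab act b (mul g h).
Proof. by move=> bg bh x bx; rewrite actM bh ?bg. Qed.

Lemma pstabV b g : pstab act b g -> pstab act b (inv g).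
Proof. by move=> bg x bx; rewrite -{1}(bg x bx) actK. Qed.

Definition supports b A := forall h, pstab act b h -> ueq (uact act h A) A.

Lemma supports_ueq b A B : ueq A B -> supports b A -> supports b B.
Proof.
move=> AB bA h bh; apply: ueq_trans (uact_ueq h (ueq_sym AB)) _.
exact: ueq_trans (bA h bh) AB.
Qed.

Lemma supports_subs b c A : subs b c -> supports b A -> supports c A.
Proof. by move=> bc bA h ch; apply: bA => x /bc; apply: ch. Qed.

Lemma supports_Atom b x : b x -> supports b (Atom x).
Proof. by move=> bx h; apply. Qed.

Lemma supports_Node b K (f : K -> U X) :
  (forall k, supports b (f k)) -> supports b (Node K f).
Proof. by move=> bf h bh; split=> k; exists k; apply: bf. Qed.

Lemma supports_kpair b A B : supports b A -> supports b B -> supports b (kpair A B).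
Proof. by move=> bA bB h bh; rewrite uact_kpair; apply: kpair_cong; [apply: bA | apply: bB]. Qed.

Lemma supports_kpair_inv b A B : supports b (kpair A B) -> supports b A /\ supports b B.
Proof. by move=> bAB; split=> h /bAB; rewrite uact_kpair => /kpair_inj[]. Qed.

Lemma conj_pstab b g h : pstab act (img act g b) h -> pstab act b (mul (inv g) (mul h g)).
Proof. by move=> gbh x bx; rewrite !actM gbh ?actK //; exists x. Qed.

Lemma supports_uact b g A : supports b A -> supports (img act g b) (uact act g A).
Proof.
move=> bA h /conj_pstab/bA/(uact_ueq g).
by rewrite -!uactM !mulgA mulgV mul1g uactM.
Qed.

Lemma supports_uact_inv b g A : supports b (uact act g A) -> supports (img act (inv g) b) A.
Proof. by move/(supports_uact (g := inv g)); rewrite uactK. Qed.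

Lemma supports_Atom_def_closed d x : def_closed_set act d -> supports d (Atom x) -> d x.
Proof.
move=> dcl dx; apply: contrapT => ndx.
by have [h [dh]] := dcl x ndx; case; apply: dx.
Qed.

Lemma ueq_uact_inv g A : ueq (uact act g A) A -> ueq (uact act (inv g) A) A.
Proof. by move/(uact_ueq (inv g)); rewrite uactK => /ueq_sym. Qed.

Lemma well_ordered_members_fixed h F R :
  well_orders R F -> ueq (uact act h F) F -> ueq (uact act h R) R ->
  forall B, umem B F -> ueq (uact act h B) B.
Proof.
case=> _ [_ [_ [tot wmin]]] hF hR.
have moveF g y : ueq (uact act g F) F -> umem y F -> umem (uact act g y) F.
  by move=> gF /(umem_uact g)/(umem_ueq_r gF).
have moveR g y y' : ueq (uact act g R) R ->
    umem (kpair y y') R -> umem (kpair (uact act g y) (uact act g y')) R.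
  by move=> gR /(umem_uact g); rewrite uact_kpair => /(umem_ueq_r gR).
apply: contrapT => /existsNP[B0 /not_implyP[FB0 nB0]].
have [m [nm [Fm mmin]]] := wmin (fun B => ~ ueq (uact act h B) B) (ex_intro _ B0 (conj nB0 FB0)).
have fixed y : umem y F -> umem (kpair y m) R -> ueq (uact act h y) y.
  by move=> Fy ym; apply: contrapT => ny; apply: (mmin y).
have hmF := moveF h m hF Fm.
case: (tot _ _ hmF Fm nm) => [hm_m | m_hm].
- apply: nm; have := uact_ueq (inv h) (fixed _ hmF hm_m).
  by rewrite !uactK.
- have hVm := moveR _ _ _ (ueq_uact_inv hR) m_hm; rewrite uactK in hVm.
  have := fixed _ (moveF _ _ (ueq_uact_inv hF) Fm) hVm; rewrite uactVK => m_hVm.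
  by apply: nm; have := uact_ueq h m_hVm; rewrite uactVK.
Qed.

Lemma supports_well_ordered_members b F R :
  well_orders R F -> supports b F -> supports b R -> forall B, umem B F -> supports b B.
Proof.
by move=> wo bF bR B FB h bh; apply: well_ordered_members_fixed wo (bF h bh) (bR h bh) B FB.
Qed.

Lemma supports_choice_value b (ch : U X) F B y :
  choice_fun ch F -> supports b ch -> supports b B -> umem (kpair B y) ch -> supports b y.
Proof.
case=> _ [_ chfun] bch bB Bych h bh.
have hBych : umem (kpair (uact act h B) (uact act h y)) ch.
  by apply: umem_ueq_r (bch h bh) _; rewrite -uact_kpair; apply: umem_uact.
exact: chfun hBych Bych (bB h bh).
Qed.

Definition uorbit b A : U X := Node {g | pstab act b g} (fun p => uact act (sval p) A).

Lemma umem_uorbit b A : umem A (uorbit b A).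
Proof. by exists (exist _ one (@pstab1 b)); rewrite /= uact1; apply: ueq_refl. Qed.

Lemma uorbitP b A y : umem y (uorbit b A) -> exists2 g, pstab act b g & ueq y (uact act g A).
Proof. by case=> -[g bg] yg; exists g. Qed.

Lemma supports_uorbit b A : supports b (uorbit b A).
Proof.
move=> h bh; split=> -[g bg].
- by exists (exist _ (mul h g) (pstabM bh bg)); rewrite /= uactM; apply: ueq_refl.
- exists (exist _ (mul (inv h) g) (pstabM (pstabV bh) bg)).
  by rewrite /= uactM uactVK; apply: ueq_refl.
Qed.

Lemma supports_ucode_Atom ltX b c x :
  strict_well_order ltX -> supports b (ucode ltX c) -> c x -> supports b (Atom x).
Proof.
move=> ltXwo /supports_kpair_inv[bF bR] cx.
apply: supports_well_ordered_members (well_orders_uimage _ _ ltXwo) bF bR _ _.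
exact: (umem_uimage Atom ltXwo cx).
Qed.

Local Notation inW := (inW act I).

Lemma ideal0 : I (fun _ => False).
Proof. by case: HI. Qed.

Lemma idealU a b : I a -> I b -> I (fun x => a x \/ b x).
Proof. by case: HI => _ [_ [IU _]]; apply: IU. Qed.

Lemma ideal1 x : I (fun z => z = x).
Proof. by case: HI => _ [_ [_ [I1 _]]]. Qed.

Lemma ideal_img g a : I a -> I (img act g a).
Proof. by case: HI => _ [_ [_ [_ Iimg]]]; apply: Iimg. Qed.

Lemma inW_symmetric A : inW A -> exists2 b, I b & supports b A.
Proof. by case: A => [x | K f] [[b [Ib bA]] _]; exists b. Qed.

Lemma inW_common_support A B : inW A -> inW B ->
  exists b, [/\ I b, supports b A & supports b B].
Proof.
move=> /inW_symmetric[a Ia aA] /inW_symmetric[b Ib bB].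
exists (fun x => a x \/ b x); split; first exact: idealU.
- by apply: supports_subs aA => x; left.
- by apply: supports_subs bB => x; right.
Qed.

Lemma inW_Node b K (f : K -> U X) :
  I b -> supports b (Node K f) -> (forall k, inW (f k)) -> inW (Node K f).
Proof. by move=> Ib bf fW; split=> //; exists b. Qed.

Lemma inW_Atom x : inW (Atom x).
Proof. by split=> //; exists (fun z => z = x); split; [apply: ideal1 | apply: supports_Atom]. Qed.

Lemma inW_members A : inW A -> (exists y, umem y A) -> exists2 y, umem y A & inW y.
Proof.
case: A => [x _ [y []] | K f [_ fW] [y [k _]]].
by exists (f k); [exists k; apply: ueq_refl | apply: fW].
Qed.

Lemma inW_kpair A B : inW A -> inW B -> inW (kpair A B).
Proof.
move=> AW BW; have [b [Ib bA bB]] := inW_common_support AW BW.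
apply: (inW_Node Ib (supports_kpair bA bB)) => -[].
- by apply: inW_Node Ib (supports_Node (fun _ => bA)) _.
- by apply: (inW_Node Ib); [apply: supports_Node | ]; case.
Qed.

Lemma inW_uact g A : inW A -> inW (uact act g A).
Proof.
elim: A => [x _ | K f IH [[b [Ib bf]] fW]]; first exact: inW_Atom.
apply: inW_Node (ideal_img g Ib) (supports_uact bf) _ => k.
exact: IH (fW k).
Qed.

Lemma inW_uimage T (lt : T -> T -> Prop) (P : T -> Prop) (f : T -> U X) b :
  I b -> (forall t, P t -> inW (f t)) -> (forall t, P t -> supports b (f t)) ->
  inW (uimage lt P f) /\ inW (uimage_order lt P f).
Proof.
move=> Ib fW bf.
have leastW (t : {t | least_index lt P f t}) : inW (f (sval t)) /\ supports b (f (sval t)).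
  by case: t => t /= [Pt _]; split; [apply: fW | apply: bf].
split; apply: (inW_Node Ib); try apply: supports_Node.
- by move=> t; case: (leastW t).
- by move=> t; case: (leastW t).
- move=> [[t t'] _] /=.
  by case: (leastW t) (leastW t') => _ bt [_ bt']; apply: supports_kpair.
- move=> [[t t'] _] /=.
  by case: (leastW t) (leastW t') => tW _ [t'W _]; apply: inW_kpair.
Qed.

Lemma inW_uorbit b A : I b -> inW A -> inW (uorbit b A).
Proof.
move=> Ib AW; apply: (inW_Node Ib); first exact: (supports_uorbit A).
by move=> p; apply: inW_uact AW.
Qed.

Lemma inW_ucode ltX c : I c -> inW (ucode ltX c).
Proof.
move=> Ic; have [FW RW] := inW_uimage ltX Ic (fun x _ => inW_Atom x) (fun x => @supports_Atom c x).
exact: inW_kpair.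
Qed.

Lemma large_supported_member a b B y :
  large act I a b -> supports a B -> umem y B -> inW y ->
  exists z, [/\ umem z B, inW z & supports b z].
Proof.
move=> lab aB By yW; have [c Ic cy] := inW_symmetric yW.
have [g [ag cgb]] := lab c Ic.
exists (uact act (inv g) y); split.
- exact: umem_ueq_r (aB _ (pstabV ag)) (umem_uact (inv g) By).
- exact: inW_uact.
- apply: supports_subs (supports_uact (g := inv g) cy) => _ [x [cx ->]].
  by have [x' [bx' ->]] := cgb x cx; rewrite actK.
Qed.

Lemma exists_choice_fun K (f : K -> U X) b :
  I b -> (forall k, inW (f k)) -> (forall k, supports b (f k)) ->
  (forall k, exists z, [/\ umem z (f k), inW z & supports b z]) ->
  exists ch, inW ch /\ choice_fun ch (Node K f).
Proof.
move=> Ib fW bf good.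
have [s [sf sinv]] : exists s : K -> U X,
    (forall k, [/\ umem (s k) (f k), inW (s k) & supports b (s k)]) /\
    (forall k k', ueq (f k) (f k') -> s k = s k').
  apply: choice_invariant good => [k | k k' | k k' k'' | k k' z kk' [fz zW bz]].
  - exact: ueq_refl.
  - exact: ueq_sym.
  - exact: ueq_trans.
  - by split=> //; apply: umem_ueq_r kk' fz.
exists (Node K (fun k => kpair (f k) (s k))); split.
- apply: (inW_Node Ib); first apply: supports_Node => k.
    by have [_ _ bs] := sf k; apply: supports_kpair.
  by move=> k; have [_ sW _] := sf k; apply: inW_kpair (fW k) sW.
- apply: choice_fun_graph => [k | k k' /sinv ->]; last exact: ueq_refl.
  by have [] := sf k.
Qed.

Lemma WO_choice_of_cofinal_orbits : cofinal_orbits act I -> WO_choice act I.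
Proof.
move=> cof F FW [R [RW wo]] Fne.
have [a [Ia aF aR]] := inW_common_support FW RW.
have [b [Ib lab]] := cof a Ia.
case: F FW Fne wo aF => [x _ _ _ _ | K f [_ fW] Fne wo aF].
  exists (Node False (fun e => match e with end)); split.
    by apply: (inW_Node ideal0); [apply: supports_Node | ]; case.
  by split; [move=> p [[]] | split=> [B [] | B B' y y' [[]]]].
have af k : supports a (f k).
  by apply: (supports_well_ordered_members wo aF aR); exists k; apply: ueq_refl.
have ab_a : subs a (fun x => a x \/ b x) by move=> x; left.
have ab_b : subs b (fun x => a x \/ b x) by move=> x; right.
apply: (exists_choice_fun (idealU Ia Ib) fW (fun k => supports_subs ab_a (af k))) => k.
have [|y fy yW] := inW_members (fW k); first by apply: Fne; exists k; apply: ueq_refl.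
have [z [fz zW bz]] := large_supported_member lab (af k) fy yW.
by exists z; split=> //; apply: supports_subs ab_b bz.
Qed.

Lemma cofinal_orbits_of_WO_choice
    (ltX : X -> X -> Prop) (ltS : (X -> Prop) -> (X -> Prop) -> Prop) :
  strict_well_order ltX -> strict_well_order ltS ->
  def_closed act I -> WO_choice act I -> cofinal_orbits act I.
Proof.
move=> ltXwo ltSwo dc woc a Ia.
pose orb c := uorbit a (ucode ltX c).
have [FW RW] := inW_uimage ltS Ia (fun c Ic => inW_uorbit Ia (inW_ucode ltX Ic))
  (fun c _ => supports_uorbit (ucode ltX c)).
have Fne B : umem B (uimage ltS I orb) -> exists y, umem y B.
  by case/uimageP=> c _ Bc; exists (ucode ltX c); apply: umem_ueq_r (ueq_sym Bc) (umem_uorbit _ _).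
have [ch [chW chF]] := woc _ FW (ex_intro _ _ (conj RW (well_orders_uimage _ _ ltSwo))) Fne.
have [s Is sch] := inW_symmetric chW.
have [d [Id [sad dcl]]] := dc _ (idealU Is Ia).
exists d; split=> // c Ic.
have [y chy yorb] := choice_funP chF (umem_uimage orb ltSwo Ic).
have [g ag yg] := uorbitP yorb.
have dy : supports d y.
  apply: (supports_choice_value chF _ _ chy).
  - by apply: supports_subs sch => x sx; apply: sad; left.
  - by apply: supports_subs (supports_uorbit _) => x ax; apply: sad; right.
have dcode : supports (img act (inv g) d) (ucode ltX c).
  exact: supports_uact_inv (supports_ueq yg dy).
exists (inv g); split; first exact: pstabV.
move=> x cx; exists (act g x); split; last by rewrite actK.
apply: supports_Atom_def_closed dcl _.
apply: supports_subs (supports_uact (g := g) (supports_ucode_Atom ltXwo dcode cx)).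
by move=> _ [_ [[x' [dx' ->]] ->]]; rewrite actVK.
Qed.

End PermutationModel.

Theorem mainTheorem4 (X G : Type) (mul : G -> G -> G) (one : G) (inv : G -> G)
  (act : G -> X -> X) (I : (X -> Prop) -> Prop)
  (HG : is_group mul one inv) (Hact : is_action mul one act)
  (HI : is_dyn_ideal act I) :
  (cofinal_orbits act I -> WO_choice act I) /\
  (def_closed act I -> WO_choice act I -> cofinal_orbits act I).
Proof.
split; first exact: (WO_choice_of_cofinal_orbits HG Hact HI).
have [ltX ltXwo] := exists_strict_well_order X.
have [ltS ltSwo] := exists_strict_well_order (X -> Prop).
exact: (cofinal_orbits_of_WO_choice HG Hact HI ltXwo ltSwo).
Qed.
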